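(* For every $\alpha,\beta>1$ and $\varepsilon>0$: (a) there is an instance with $N=C$ and an outcome that satisfies $\alpha$-proportional fairness but not $(\alpha+1-\varepsilon)$-individual fairness; (b) there is an instance with $N=C$ and an outcome that satisfies $\beta$-individual fairness but not $(\beta+1-\varepsilon)$-proportional fairness; (c) there is an instance with $N\subseteq C$ and an outcome that satisfies $\beta$-individual fairness but not $(2\beta-\varepsilon)$-proportional fairness.
   Context: Let $(\mathcal X,d)$ be a metric space, $N=[n]$ a set of agents and $C$ a set of candidates located in $\mathcal X$, $k\in\mathbb N^+$; an outcome is $W\subseteq C$ with $|W|\le k$; $B(i,r)=\{x\in\mathcal X:d(i,x)\le r\}$; $d(i,W)=\min_{c\in W}d(i,c)$. $\alpha$-proportional fairness: there is no group $N'\subseteq N$ with $|N'|\ge n/k$ and candidate $c\in C\setminus W$ such that $\alpha\, d(i,c)<d(i,W)$ for all $i\in N'$. $\beta$-individual fairness (for instances with $N\subseteq C$): $d(i,W)\le\beta\, r(i)$ for all $i\in N$, where $r(i)=\min\{r\in\mathbb R: |B(i,r)\cap N|\ge n/k\}$. *)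

From HB Require Import structures.
From mathcomp Require Import all_boot all_order all_algebra.
From mathcomp Require Import reals.
Set Implicit Arguments. Unset Strict Implicit. Unset Printing Implicit Defensive.
Import Order.TTheory GRing.Theory Num.Theory.
Local Open Scope ring_scope.

Section Fairness.
Variable R : realType.
Variable T : Type.
Variable d : T -> T -> R.

Definition is_metric : Prop :=
  [/\ (forall x y, 0 <= d x y),
      (forall x y, d x y = 0 <-> x = y),
      (forall x y, d x y = d y x) &
      (forall x y z, d x z <= d x y + d y z)].

(* n agents 'I_n located by [ag], m candidates 'I_m located by [cd],
   committee size k. *)
Variables (n m k : nat) (ag : 'I_n -> T) (cd : 'I_m -> T).

Definition outcome (W : {set 'I_m}) : Prop := (#|W| <= k)%N.

(* alpha * d(i,c) < d(i,W) = min_{c' in W} d(i,c')  (with min over the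
   empty set being +infinity) *)
Definition closer_than_W (alpha : R) (W : {set 'I_m}) (i : 'I_n) (c : 'I_m) : Prop :=
  forall c', c' \in W -> alpha * d (ag i) (cd c) < d (ag i) (cd c').

Definition prop_fair (alpha : R) (W : {set 'I_m}) : Prop :=
  ~ exists (N' : {set 'I_n}) (c : 'I_m),
      [/\ n%:R / k%:R <= #|N'|%:R :> R, c \notin W &
          forall i, i \in N' -> closer_than_W alpha W i c].

Definition ball_agents (i : 'I_n) (r : R) : {set 'I_n} :=
  [set j | d (ag i) (ag j) <= r].

Definition is_radius (i : 'I_n) (r : R) : Prop :=
  n%:R / k%:R <= #|ball_agents i r|%:R :> R /\
  forall r', n%:R / k%:R <= #|ball_agents i r'|%:R :> R -> r <= r'.

Definition indiv_fair (beta : R) (W : {set 'I_m}) : Prop :=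
  forall i r, is_radius i r ->
    exists2 c, c \in W & d (ag i) (cd c) <= beta * r.

End Fairness.

(** Each separation is witnessed by a few points on the real line.
  (a) Agents at [-(a+1), -1, 0, 1, a+1], [k = 2], the two outer points elected.
  A blocking coalition has at least three members, none of them elected, so
  it is [{-1, 0, 1}]; but no candidate is within distance [< 1] of both [1]
  and [-1].  Yet the agent at [0] has radius [1] and distance [a+1] to the
  outcome.
  (b), (c) Distances pass through a hub at [0].  In (b) the agents sit at
  [1, 0, -1, b, b] with [k = 2] and [b] elected: an agent at [x] near the hub
  has radius [1 + |x|] and distance [|x| + b <= b (1 + |x|)] to [b], while the
  unelected hub is [b + 1] times closer for the coalition [{1, 0, -1}].  In (c)
  the two agents [1, -1] ([k = 1]) have radius [2] and distance [2b] to the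
  elected candidate [2b - 1], but distance [1] to the hub candidate. *)
From HB Require Import structures.
From mathcomp Require Import all_boot all_order all_algebra.
From mathcomp Require Import reals.
From mathcomp Require Import ring lra.
Set Implicit Arguments. Unset Strict Implicit. Unset Printing Implicit Defensive.
Import Order.TTheory GRing.Theory Num.Theory.
Local Open Scope ring_scope.

Ltac case_norms := repeat match goal with |- context [`|?e|] =>
  let h := fresh in have [h|h] := lerP 0 e;
  [rewrite (ger0_norm h) | rewrite (ltr0_norm h)] end.

Ltac case_eqs := repeat match goal with |- context [?a == ?b] =>
  case: (a =P b) => ? /= end.

Section Radius.
Variables (R : realType) (T : Type) (d : T -> T -> R) (n k : nat).
Variables (ag : 'I_n -> T).

Lemma radius_lb i r r0 (S : {set 'I_n}) :
  #|S|%:R < n%:R / k%:R :> R ->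
  (forall j, j \notin S -> r0 <= d (ag i) (ag j)) ->
  n%:R / k%:R <= #|ball_agents d ag i r|%:R :> R -> r0 <= r.
Proof.
move=> small_S far_S big_ball; rewrite leNgt; apply/negP => lt_r_r0.
have : ball_agents d ag i r \subset S.
  apply/subsetP => j; rewrite inE => near_j; apply: contraT => /far_S.
  by rewrite leNgt (le_lt_trans near_j lt_r_r0).
by move/subset_leq_card; rewrite -(ler_nat R) => ?; lra.
Qed.

Lemma is_radius_of_bounds i r (S : {set 'I_n}) :
  n%:R / k%:R <= #|ball_agents d ag i r|%:R :> R ->
  #|S|%:R < n%:R / k%:R :> R ->
  (forall j, j \notin S -> r <= d (ag i) (ag j)) ->
  is_radius d k ag i r.
Proof.
by move=> big_ball small_S far_S; split=> // r'; exact: radius_lb small_S far_S.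
Qed.

End Radius.

Lemma not_closer_than_W_self (R : realType) (T : Type) (d : T -> T -> R)
    (n m : nat) (ag : 'I_n -> T) (cd : 'I_m -> T) (a : R) (W : {set 'I_m})
    i c c' :
  is_metric d -> 0 <= a -> c' \in W -> ag i = cd c' ->
  ~ closer_than_W d ag cd a W i c.
Proof.
case=> d_ge0 d_eq0 _ _ a_ge0 c'W agi /(_ c' c'W).
by rewrite -agi (proj2 (d_eq0 _ _) erefl) ltNge mulr_ge0.
Qed.

Section Metrics.
Context {R : realType}.

Definition line_dist (x y : R) : R := `|x - y|.

(* The British Rail metric: every journey between distinct points passes
   through the hub [0]. *)
Definition hub_dist (x y : R) : R := if x == y then 0 else `|x| + `|y|.

Lemma line_dist_metric : is_metric line_dist.
Proof.
split=> [x y|x y|x y|x y z]; rewrite /line_dist.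
- exact: normr_ge0.
- split=> [/eqP|->]; last by rewrite subrr normr0.
  by rewrite normr_eq0 subr_eq0 => /eqP.
- exact: distrC.
- exact: ler_distD.
Qed.

Lemma hub_dist_metric : is_metric hub_dist.
Proof.
rewrite /hub_dist; split=> [x y|x y|x y|x y z].
- by case_eqs; case_norms; lra.
- by split=> [|->]; case_eqs; rewrite ?eqxx //; case_norms; lra.
- by rewrite eq_sym addrC.
- by case_eqs; subst; case_norms; lra.
Qed.

Lemma hub_dist_le x y : hub_dist x y <= `|x| + `|y|.
Proof. by rewrite /hub_dist; case: ifP; rewrite ?addr_ge0. Qed.

End Metrics.

Section LineInstance.
Variables (R : realType) (a : R).
Local Notation o i := (@Ordinal 5 i isT).

Definition line_points (i : 'I_5) : R := nth 0 [:: -(a + 1); -1; 0; 1; a + 1] i.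
Definition line_outcome : {set 'I_5} := [set o 0; o 4].

Lemma card_line_outcomeC : #|~: line_outcome| = 3.
Proof. by rewrite cardsCs setCK cards2 card_ord. Qed.

Lemma line_outcome_prop_fair : 1 < a ->
  prop_fair line_dist 2 line_points line_points a line_outcome.
Proof.
move=> a_gt1 [N' [c [N'_large _ N'_closer]]].
have a_ge0 : 0 <= a := ltW (lt_trans ltr01 a_gt1).
have N'_sub : N' \subset ~: line_outcome.
  apply/subsetP => i /N'_closer closer_i; rewrite inE; apply/negP => iW.
  exact: (not_closer_than_W_self (@line_dist_metric R) a_ge0 iW erefl closer_i).
have N'_eq : N' = ~: line_outcome.
  apply/eqP; rewrite eqEcard N'_sub card_line_outcomeC /=.
  by rewrite leqNgt ltnS -(ler_nat R); apply/negP => ?; lra.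
have [near_m1 near_1] : `|-1 - line_points c| < 1 /\ `|1 - line_points c| < 1.
  have at_m1 : o 1 \in N' by rewrite N'_eq !inE.
  have at_1 : o 3 \in N' by rewrite N'_eq !inE.
  have := N'_closer _ at_m1 (o 0); have := N'_closer _ at_1 (o 4).
  rewrite !inE /line_dist /line_points /= => /(_ isT) lt_1 /(_ isT) lt_m1.
  have dist_1 : 1 - (a + 1) = - a by ring.
  have dist_m1 : -1 - - (a + 1) = a by ring.
  rewrite dist_1 dist_m1 normrN (ger0_norm a_ge0) in lt_1 lt_m1.
  have a_gt0 : 0 < a := lt_trans ltr01 a_gt1.
  by split; rewrite -(ltr_pM2l a_gt0) mulr1.
have := ler_distD (line_points c) 1 (-1).
rewrite [X in _ <= _ + X]distrC opprK (ger0_norm (addr_ge0 ler01 ler01)).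
by lra.
Qed.

Lemma line_outcome_not_indiv_fair eps : 1 < a -> 0 < eps ->
  ~ indiv_fair line_dist 2 line_points line_points (a + 1 - eps) line_outcome.
Proof.
move=> a_gt1 eps_gt0 /(_ (o 2) 1) fair_mid.
have mid_radius : is_radius line_dist 2 line_points (o 2) 1.
  apply: (is_radius_of_bounds (S := [set o 2])); last first.
  - move=> j; rewrite inE /line_dist /line_points.
    by case: j => [[|[|[|[|[|?]]]]] ?] //= _; case_norms; lra.
  - by rewrite cards1; lra.
  have : ~: line_outcome \subset ball_agents line_dist line_points (o 2) 1.
    apply/subsetP => j; rewrite !inE /line_dist /line_points.
    by case: j => [[|[|[|[|[|?]]]]] ?] //= _; case_norms; lra.
  by move/subset_leq_card; rewrite card_line_outcomeC -(ler_nat R) => ?; lra.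
have [c] := fair_mid mid_radius; rewrite !inE /line_dist /line_points.
by case/orP=> /eqP-> /=; case_norms; lra.
Qed.

End LineInstance.

Section HubInstance.
Variables (R : realType) (b : R).
Local Notation o i := (@Ordinal 5 i isT).

Definition hub_points (i : 'I_5) : R := nth 0 [:: 1; 0; -1; b; b] i.
Definition hub_outcome : {set 'I_5} := [set o 3].

Lemma hub_points_far (i j : 'I_5) :
  1 < b -> (i < 3)%N -> j \notin [set i; o 1] ->
  1 + `|hub_points i| <= hub_dist (hub_points i) (hub_points j).
Proof.
rewrite /hub_points /hub_dist !inE => b_gt1.
by case: i j => [[|[|[|[|[|?]]]]] ?] [[|[|[|[|[|?]]]]] ?] //= _ _;
  case_eqs; case_norms; lra.
Qed.

Lemma hub_outcome_indiv_fair : 1 < b ->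
  indiv_fair hub_dist 2 hub_points hub_points b hub_outcome.
Proof.
move=> b_gt1 i r [big_ball _]; exists (o 3); first by rewrite inE.
have b_ge0 : 0 <= b := ltW (lt_trans ltr01 b_gt1).
have [near_hub | at_b] := ltnP i 3.
  have r_lb : 1 + `|hub_points i| <= r.
    apply: (radius_lb (S := [set i; o 1])) big_ball.
      by rewrite cards2; case: (_ != _) => /=; lra.
    by move=> j; apply: hub_points_far.
  (* [b r >= b + b |x| >= b + |x|] since [b >= 1] *)
  have := ler_wpM2l b_ge0 r_lb; have := normr_ge0 (hub_points i).
  have := hub_dist_le (hub_points i) b; rewrite (ger0_norm b_ge0) /=.
  by nra.
have r_ge0 : 0 <= r.
  apply: (radius_lb (S := set0)) big_ball; first by rewrite cards0; lra.
  by move=> j _; case: (@hub_dist_metric R).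
have -> : hub_points i = b.
  by clear big_ball; case: i at_b => [[|[|[|[|[|?]]]]] ?].
by rewrite /hub_dist eqxx mulr_ge0.
Qed.

Lemma hub_outcome_not_prop_fair eps : 1 < b -> 0 < eps ->
  ~ prop_fair hub_dist 2 hub_points hub_points (b + 1 - eps) hub_outcome.
Proof.
move=> b_gt1 eps_gt0; apply; exists (o 0 |: [set o 1; o 2]), (o 1); split.
- by rewrite cardsU1 cards2 !inE /=; lra.
- by rewrite inE.
- move=> i iN c'; rewrite inE => /eqP->; rewrite /hub_dist.
  by move: iN; rewrite !inE /hub_points => /or3P[]/eqP-> /=;
    case_eqs; case_norms; lra.
Qed.

End HubInstance.

Section SubsetInstance.
Variables (R : realType) (b : R).
Local Notation o i := (@Ordinal 4 i isT).

Definition subset_candidates (c : 'I_4) : R := nth 0 [:: 1; -1; 0; 2 * b - 1] c.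
Definition agent_candidate : 'I_2 -> 'I_4 := widen_ord (isT : (2 <= 4)%N).
Definition subset_outcome : {set 'I_4} := [set o 3].

Lemma agent_candidate_inj : injective agent_candidate.
Proof. by move=> i j /(congr1 val) /= /val_inj. Qed.

Lemma subset_outcome_indiv_fair : 1 < b ->
  indiv_fair hub_dist 1 (subset_candidates \o agent_candidate)
    subset_candidates b subset_outcome.
Proof.
move=> b_gt1 i r [big_ball _]; exists (o 3); first by rewrite inE.
have r_ge2 : 2 <= r.
  apply: (radius_lb (S := [set i])) big_ball; first by rewrite cards1; lra.
  move=> j; rewrite inE /hub_dist /subset_candidates /=.
  by case: i j => [[|[|?]] ?] [[|[|?]] ?] //= _;
    case_eqs; case_norms; lra.
have b_ge0 : 0 <= b := ltW (lt_trans ltr01 b_gt1).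
have := ler_wpM2l b_ge0 r_ge2; rewrite /hub_dist /subset_candidates /=.
by case: i {big_ball} => [[|[|?]] ?] //= br_ge; case_eqs; case_norms; lra.
Qed.

Lemma subset_outcome_not_prop_fair eps : 1 < b -> 0 < eps ->
  ~ prop_fair hub_dist 1 (subset_candidates \o agent_candidate)
      subset_candidates (2 * b - eps) subset_outcome.
Proof.
move=> b_gt1 eps_gt0; apply; exists setT, (o 2); split.
- by rewrite cardsT card_ord; lra.
- by rewrite inE.
- move=> i _ c'; rewrite inE => /eqP->; rewrite /hub_dist /subset_candidates /=.
  by case: i => [[|[|?]] ?] //=; case_eqs; case_norms; lra.
Qed.

End SubsetInstance.

Theorem theorem2 (R : realType) (alpha beta eps : R) :
  1 < alpha -> 1 < beta -> 0 < eps ->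
  (* (a): N = C, i.e. agents and candidates are the same points 'I_n *)
  (exists (T : Type) (d : T -> T -> R) (n k : nat) (x : 'I_n -> T)
          (W : {set 'I_n}),
     [/\ is_metric d /\ (0 < n)%N /\ (0 < k)%N, outcome k W,
         prop_fair d k x x alpha W &
         ~ indiv_fair d k x x (alpha + 1 - eps) W]) /\
  (* (b): N = C *)
  (exists (T : Type) (d : T -> T -> R) (n k : nat) (x : 'I_n -> T)
          (W : {set 'I_n}),
     [/\ is_metric d /\ (0 < n)%N /\ (0 < k)%N, outcome k W,
         indiv_fair d k x x beta W &
         ~ prop_fair d k x x (beta + 1 - eps) W]) /\
  (* (c): N \subseteq C, via an injection f of agents into candidates *)
  (exists (T : Type) (d : T -> T -> R) (n m k : nat) (cd : 'I_m -> T)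
          (f : 'I_n -> 'I_m) (W : {set 'I_m}),
     [/\ is_metric d /\ (0 < n)%N /\ (0 < k)%N, injective f, outcome k W,
         indiv_fair d k (cd \o f) cd beta W &
         ~ prop_fair d k (cd \o f) cd (2 * beta - eps) W]).
Proof.
move=> alpha_gt1 beta_gt1 eps_gt0; split; [|split].
- exists R, line_dist, 5%N, 2%N, (line_points alpha), line_outcome; split.
  + by split; first exact: line_dist_metric.
  + by rewrite /outcome cards2.
  + exact: line_outcome_prop_fair alpha_gt1.
  + exact: line_outcome_not_indiv_fair alpha_gt1 eps_gt0.
- exists R, hub_dist, 5%N, 2%N, (hub_points beta), hub_outcome; split.
  + by split; first exact: hub_dist_metric.
  + by rewrite /outcome cards1.
  + exact: hub_outcome_indiv_fair beta_gt1.
  + exact: hub_outcome_not_prop_fair beta_gt1 eps_gt0.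
- exists R, hub_dist, 2%N, 4%N, 1%N, (subset_candidates beta), agent_candidate,
    subset_outcome; split.
  + by split; first exact: hub_dist_metric.
  + exact: agent_candidate_inj.
  + by rewrite /outcome cards1.
  + exact: subset_outcome_indiv_fair beta_gt1.
  + exact: subset_outcome_not_prop_fair beta_gt1 eps_gt0.
Qed.
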